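(* For every $n\ge 1$ and every unit interval order $U\in\mathcal U_n$, we have $a(U)=\zeta(p(U))$.
   Context: Unit interval orders: let $\mathcal I=\{I_1,\dots,I_n\}$ be a set of $n$ closed intervals of length $1$ in $\mathbb R$, numbered from left to right. The poset $U(\mathcal I)$ on $\{1,\dots,n\}$ is defined by $i\prec j$ iff $I_i$ lies strictly to the left of $I_j$ (the right endpoint of $I_i$ is less than the left endpoint of $I_j$). A unit interval order is a relation on $\{1,\dots,n\}$ arising in this way; $\mathcal U_n$ denotes the set of unit interval orders on $\{1,\dots,n\}$. Dyck paths: a Dyck path of length $n$ is a lattice path from $(0,0)$ to $(n,n)$ with steps $(0,1)$ (up, letter $a$) and $(1,0)$ (right, letter $b$) never going below the line $y=x$; $\mathcal D_n$ is the set of them. For $1\le i<j\le n$ the box $(i,j)$ is the unit square $[i-1,i]\times[j-1,j]$. The area set of a Dyck path is the set of boxes lying between the path and the diagonal. The area sequence $(a_1,\dots,a_n)$ records, for each horizontal row from bottom to top, the number of boxes of the area set in that row; area sequences of Dyck paths are exactly the nonnegative integer sequences with $a_1=0$ and $a_i\le a_{i-1}+1$. The map $a$: for $U\in\mathcal U_n$ with order $\prec$, $a(U)$ is the Dyck path whose area set is $\{(i,j): 1\le i<j\le n,\ i\not\prec j\}$. Part listings: for a sequence $w=(w_1,\dots,w_n)$ of nonnegative integers, $P(w)$ is the poset on $\{1,\dots,n\}$ with $i\prec j$ iff either $w_j-w_i\ge 2$, or $w_j-w_i=1$ and $i<j$. It is a fact (established in the paper) that for every $U\in\mathcal U_n$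 there is a unique sequence $w$ which is the area sequence of a Dyck path and such that $P(w)$ is isomorphic (as a poset) to $U$; $p(U)$ denotes the Dyck path with this area sequence. The zeta map $\zeta:\mathcal D_n\to\mathcal D_n$: given $D$, label the top endpoint of each up step of $D$ by $a$ and the right endpoint of each right step by $b$. Read these labels first along the line $y=x$ from bottom-left to top-right, then along $y=x+1$ in the same direction, then along $y=x+2$, etc. Interpreting each $b$ read as an up step and each $a$ read as a right step yields the lattice path $\zeta(D)$ from $(0,0)$ to $(n,n)$ (which is a Dyck path). *)

From Stdlib Require Import Reals.
From mathcomp Require Import all_boot.
Set Implicit Arguments. Unset Strict Implicit. Unset Printing Implicit Defensive.

(* Elements 1..n of the paper are represented by 'I_n (element k+1 <-> k). *)

(* U is a unit interval order on {1..n}: there are n distinct closed unit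
   intervals I_i = [x_i, x_i + 1], numbered from left to right (x strictly
   increasing), with  i < j  iff  x_i + 1 < x_j (I_i strictly left of I_j). *)
Definition is_UIO (n : nat) (U : rel 'I_n) : Prop :=
  exists x : 'I_n -> R,
    (forall i j : 'I_n, (i < j)%N -> Rlt (x i) (x j)) /\
    (forall i j : 'I_n, U i j <-> Rlt (Rplus (x i) R1) (x j)).

(* A lattice path is a seq bool: true = up step (0,1) (letter a),
   false = right step (1,0) (letter b). *)
Definition ups (s : seq bool) : nat := count id s.
Definition rights (s : seq bool) : nat := count negb s.

Definition dyck (n : nat) (D : seq bool) : bool :=
  [&& size D == (n + n)%N, ups D == n &
      all (fun k => rights (take k D) <= ups (take k D)) (iota 0 (size D).+1)].

(* Box (i,j) (1-based, the unit square [i-1,i]x[j-1,j]) lies between the path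
   and the diagonal: i < j and the path reaches height j while its
   x-coordinate is still <= i-1. *)
Definition in_area (D : seq bool) (i j : nat) : bool :=
  (0 < i) && (i < j) &&
  has (fun k => (j <= ups (take k D)) && (rights (take k D) <= i.-1))
      (iota 0 (size D).+1).

Definition area_seq (n : nat) (D : seq bool) : seq nat :=
  mkseq (fun j => count (fun i => in_area D i j.+1) (iota 1 n)) n.

Definition Pw (n : nat) (w : seq nat) : rel 'I_n :=
  fun i j => ((nth 0 w i).+2 <= nth 0 w j) ||
             ((nth 0 w j == (nth 0 w i).+1) && (i < j)%N).

Definition poset_iso (n : nat) (P Q : rel 'I_n) : Prop :=
  exists f : 'I_n -> 'I_n, bijective f /\ forall i j, P i j = Q (f i) (f j).

Definition is_p (n : nat) (U : rel 'I_n) (D : seq bool) : Prop :=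
  dyck n D /\ poset_iso (@Pw n (area_seq n D)) U.

Definition is_a (n : nat) (U : rel 'I_n) (D : seq bool) : Prop :=
  dyck n D /\
  forall i j : nat, in_area D i j <->
    exists (i' j' : 'I_n), [/\ i = i'.+1, j = j'.+1, (i' < j')%N & ~~ U i' j'].

(* Labelled endpoints of the steps: (x, y, label) with label true = a (up step),
   false = b (right step). *)
Definition step_points (D : seq bool) : seq (nat * nat * bool) :=
  mkseq (fun k => let t := take k.+1 D in (rights t, ups t, nth false D k))
        (size D).

Definition read_le (u v : nat * nat * bool) : bool :=
  let: (xu, yu, _) := u in let: (xv, yv, _) := v in
  ((yu - xu) < (yv - xv)) || ((yu - xu == yv - xv) && (xu <= xv)).

(* b read -> up step (true); a read -> right step (false). *)
Definition zeta (D : seq bool) : seq bool :=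
  map (fun u : nat * nat * bool => ~~ u.2) (sort read_le (step_points D)).

From Stdlib Require Import Reals Lra.
From mathcomp Require Import all_boot zify.
Set Implicit Arguments. Unset Strict Implicit. Unset Printing Implicit Defensive.

(* Record a path by the abscissas [upx] of its up steps; the area sequence is
   then [w_r = r - upx_r].  Reading the labels of [D] diagonal by diagonal shows
   that [zeta D] is the concatenation over [d] of the subwords of [w] formed by
   the letters [d - 1] and [d], read as right and up steps (Haglund).  Hence the
   up steps of [zeta D] come in the order of the pairs [(w_r, r)], and the
   abscissa of the up step of [r] is the number of elements below [r] in [P(w)].
   The box [(i, j)] of [zeta D] is thus in the area iff the [i]-th element of
   that order is not below the [j]-th one: relabelling by this order is an
   isomorphism from [P(w)] onto any [U] with [a(U) = zeta D].  Conversely, for a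
   unit interval order the predecessors of [j] are the [down_card j] first
   elements, so [a(U)] has the sorted down-degrees of [U] as up-step abscissas;
   an isomorphism [P(w) ~ U] preserves the multiset of down-degrees, whence
   [zeta D = a(U)].  Existence of [p(U)] follows since [zeta] is injective, hence
   bijective, on the finite set of Dyck paths of length [n]. *)

Fixpoint upx (s : seq bool) : seq nat :=
  match s with
  | [::] => [::]
  | true :: s' => 0 :: upx s'
  | false :: s' => map S (upx s')
  end.

Lemma ups_cons b s : ups (b :: s) = b + ups s. Proof. by []. Qed.
Lemma rights_cons b s : rights (b :: s) = ~~ b + rights s. Proof. by []. Qed.

Lemma ups_rcons s b : ups (rcons s b) = ups s + b.
Proof. by rewrite /ups -cats1 count_cat /= addn0. Qed.
Lemma rights_rcons s b : rights (rcons s b) = rights s + ~~ b.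
Proof. by rewrite /rights -cats1 count_cat /= addn0. Qed.

Lemma size_ups_rights s : size s = ups s + rights s.
Proof. by rewrite /ups /rights -(count_predC id). Qed.

Lemma ups_take_le k s : ups (take k s) <= ups s.
Proof. by rewrite -{2}(cat_take_drop k s) /ups count_cat leq_addr. Qed.

Lemma size_upx s : size (upx s) = ups s.
Proof. by elim: s => [|[] s IH] //=; rewrite ?size_map IH. Qed.

Lemma upx_cat s1 s2 : upx (s1 ++ s2) = upx s1 ++ map (addn (rights s1)) (upx s2).
Proof.
elim: s1 => [|[] s1 IH] /=; first by rewrite map_id_in.
  by rewrite IH.
by rewrite IH map_cat -map_comp; congr (_ ++ _); apply: eq_map => x /=; rewrite addSn.
Qed.

Lemma upx_rcons s b : upx (rcons s b) = if b then rcons (upx s) (rights s) else upx s.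
Proof. by rewrite -cats1 upx_cat; case: b; rewrite /= ?addn0 ?cats1 ?cats0. Qed.

Lemma upx_sorted s : sorted leq (upx s).
Proof.
elim: s => [|[] s IH] //=; last by rewrite sorted_map.
by rewrite path_min_sorted //; apply/allP.
Qed.

Lemma upx_inj s1 s2 : rights s1 = rights s2 -> upx s1 = upx s2 -> s1 = s2.
Proof.
elim: s1 s2 => [|b1 s1 IH] [|b2 s2] //=.
- by case: b2 => //= _; case: (upx s2).
- by case: b1 => //= _; case: (upx s1).
case: b1; case: b2 => //= Hr.
- by case=> /(IH _ Hr) ->.
- by case: (upx s2).
- by case: (upx s1).
- by case: Hr => /IH H /(inj_map succn_inj) /H ->.
Qed.

Lemma has_iota0S (p : pred nat) m :
  has p (iota 0 m.+1) = p 0 || has (fun k => p k.+1) (iota 0 m).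
Proof. by rewrite /= -(addn0 1) iotaDl has_map. Qed.

Lemma has_prefix_cons (b : bool) s r c :
  has (fun k => (r < ups (take k (b :: s))) && (rights (take k (b :: s)) <= c))
      (iota 0 (size (b :: s)).+1)
  = has (fun k => (r < b + ups (take k s)) && (~~ b + rights (take k s) <= c))
        (iota 0 (size s).+1).
Proof. by rewrite has_iota0S take0 [ups [::]]/= ltn0. Qed.

Lemma has_prefix_upxE s r c :
  has (fun k => (r < ups (take k s)) && (rights (take k s) <= c)) (iota 0 (size s).+1)
  = (r < ups s) && (nth 0 (upx s) r <= c).
Proof.
elim: s r c => [|b s IH] r c //.
rewrite has_prefix_cons; case: b.
  case: r => [|r].
    by apply/hasP; exists 0; rewrite ?mem_iota // take0.
  rewrite [upx _]/= ups_cons add1n ltnS -IH.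
  by apply: eq_has => k /=; rewrite add1n ltnS add0n.
case: c => [|c].
  apply/idP/idP => [/hasP[k _ /andP[_]] //|/andP[Hr]].
  by rewrite (nth_map 0) // size_upx.
rewrite [upx _]/= ups_cons add0n; case: (ltnP r (ups s)) => Hr.
  rewrite (nth_map 0) ?size_upx // ltnS; have := IH r c; rewrite Hr andTb => <-.
  by apply: eq_has => k /=; rewrite add1n add0n ltnS.
rewrite andFb; have := IH r c; rewrite (leq_gtF Hr) andFb; apply: etrans.
by apply: eq_has => k /=; rewrite add1n add0n ltnS.
Qed.

Lemma prefix_at_up s r : r < ups s ->
  exists k, ups (take k s) = r /\ rights (take k s) = nth 0 (upx s) r.
Proof.
elim: s r => [|[] s IH] r //.
- case: r => [|r] Hr; first by exists 0; rewrite take0.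
  have [k [H1 H2]] := IH r Hr; exists k.+1.
  by rewrite [take _ _]/= ups_cons rights_cons H1 H2.
- rewrite ups_cons add0n => Hr; have [k [H1 H2]] := IH r Hr; exists k.+1.
  by rewrite [take _ _]/= ups_cons rights_cons H1 H2 (nth_map 0) // size_upx.
Qed.

Lemma rights_take_le_upx s k : ups (take k s) < ups s ->
  rights (take k s) <= nth 0 (upx s) (ups (take k s)).
Proof.
elim: s k => [|b s IH] [|k] //.
case: b; rewrite [take _ _]/= !ups_cons rights_cons ?add1n ?add0n ?ltnS; first exact: IH.
by move=> H; rewrite (nth_map 0) ?size_upx // ltnS; apply: IH.
Qed.

Definition ballot (s : seq bool) := forall k, rights (take k s) <= ups (take k s).

Lemma dyckP n D : dyck n D <-> [/\ size D = n + n, ups D = n & ballot D].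
Proof.
rewrite /dyck; split.
- case/and3P => /eqP H1 /eqP H2 /allP H3; split => // k.
  case: (leqP k (size D)) => Hk; first by apply: H3; rewrite mem_iota.
  rewrite take_oversize ?(ltnW Hk) //.
  by have := H3 (size D); rewrite mem_iota leqnn take_size; apply.
- case=> H1 H2 H3; apply/and3P; split; try by apply/eqP.
  by apply/allP => k _; apply: H3.
Qed.

Lemma dyck_rights n D : dyck n D -> rights D = n.
Proof. by case/dyckP => Hs Hu _; move: Hs; rewrite size_ups_rights Hu; lia. Qed.

Lemma ballot_rights s : ballot s -> rights s <= ups s.
Proof. by move=> H; have := H (size s); rewrite take_size. Qed.

Lemma ballot_upx s : ballot s -> forall r, r < ups s -> nth 0 (upx s) r <= r.
Proof. by move=> H r /prefix_at_up [k [<- <-]]. Qed.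

Lemma upx_ballot s : rights s <= ups s ->
  (forall r, r < ups s -> nth 0 (upx s) r <= r) -> ballot s.
Proof.
move=> Hs Hx k; case: (ltnP (ups (take k s)) (ups s)) => Hk.
  exact: leq_trans (rights_take_le_upx Hk) (Hx _ Hk).
rewrite -{1}(cat_take_drop k s) in Hs.
by move: Hs Hk; rewrite /rights /ups count_cat -/(ups s); lia.
Qed.

Lemma in_areaE s i j : in_area s i j =
  [&& 0 < i, i < j, j.-1 < ups s & nth 0 (upx s) j.-1 <= i.-1].
Proof. by rewrite /in_area; case: j => [|j]; rewrite ?ltn0 ?andbF // has_prefix_upxE !andbA. Qed.

Lemma count_iota_interval a b n :
  count (fun i => a < i <= b) (iota 1 n) = minn b n - minn a n.
Proof.
elim: n => [|n IH]; first by rewrite !minn0.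
by rewrite -[n.+1]addn1 iotaD count_cat IH /= add1n addn0; lia.
Qed.

Definition area_word (D : seq bool) := mkseq (fun r => r - nth 0 (upx D) r) (ups D).

Lemma size_area_word D : size (area_word D) = ups D.
Proof. exact: size_mkseq. Qed.

Lemma nth_area_word D r : r < ups D -> nth 0 (area_word D) r = r - nth 0 (upx D) r.
Proof. exact: nth_mkseq. Qed.

Lemma area_seqE n D : dyck n D -> area_seq n D = area_word D.
Proof.
case/dyckP => _ Hups Hb; rewrite /area_seq /area_word Hups /mkseq.
apply/eq_in_map => j; rewrite mem_iota add0n => /andP[_ Hj].
have Hx : nth 0 (upx D) j <= j by apply: ballot_upx; rewrite ?Hups.
transitivity (count (fun i => nth 0 (upx D) j < i <= j) (iota 1 n)).
  apply: eq_in_count => -[|i]; rewrite mem_iota // in_areaE Hups Hj /= => _.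
  by rewrite ltnS andbC.
by rewrite count_iota_interval; lia.
Qed.

Definition band (d : nat) (w : seq nat) : seq bool :=
  [seq x == d | x <- w & (x == d) || (x.+1 == d)].

Definition height (s : seq bool) := ups s - rights s.

(* The endpoint of step [k] lies on the diagonal [y = x + level s k]. *)
Definition level (s : seq bool) k := height (take k.+1 s).

(* The labels read by [zeta] along the diagonal [y = x + d], translated into steps. *)
Definition diag_word (s : seq bool) d :=
  [seq ~~ nth false s k | k <- iota 0 (size s) & level s k == d].

Lemma band_rcons d w x : band d (rcons w x) =
  band d w ++ (if (x == d) || (x.+1 == d) then [:: x == d] else [::]).
Proof. by rewrite /band filter_rcons; case: ifP; rewrite ?map_rcons -?cats1 ?cats0. Qed.

Lemma ballot_rcons s b : ballot (rcons s b) -> ballot s.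
Proof.
move=> H k; case: (leqP k (size s)) => Hk; first by have := H k; rewrite -cats1 takel_cat.
rewrite take_oversize ?(ltnW Hk) //.
by have := H (size s); rewrite -cats1 takel_cat // take_size.
Qed.

Lemma area_word_rcons s b :
  area_word (rcons s b) = if b then rcons (area_word s) (height s) else area_word s.
Proof.
rewrite /area_word ups_rcons upx_rcons; case: b; rewrite ?addn0 //.
rewrite addn1 mkseqS nth_rcons size_upx ltnn eqxx; congr rcons.
by apply/eq_in_map => r; rewrite mem_iota add0n => /andP[_ Hr]; rewrite nth_rcons size_upx Hr.
Qed.

Lemma diag_word_rcons s b d : diag_word (rcons s b) d =
  diag_word s d ++ (if height (rcons s b) == d then [:: ~~ b] else [::]).
Proof.
rewrite /diag_word size_rcons -addn1 iotaD add0n filter_cat map_cat /=.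
rewrite /level take_oversize ?size_rcons //; congr (_ ++ _); last first.
  by case: ifP => _ //=; rewrite nth_rcons ltnn eqxx.
have Etake k : k < size s -> take k.+1 (rcons s b) = take k.+1 s.
  by move=> Hk; rewrite -cats1 takel_cat.
rewrite (@eq_in_filter _ _ (fun k => height (take k.+1 s) == d)); last first.
  by move=> k; rewrite mem_iota add0n => /andP[_ /Etake ->].
apply/eq_in_map => k; rewrite mem_filter mem_iota add0n => /and3P[_ _ Hk].
by rewrite nth_rcons Hk.
Qed.

Lemma band_step_up h d :
  (if d < h then [:: true] else [::]) ++
  (if (h == d) || (h.+1 == d) then [:: h == d] else [::]) =
  (if h.+1 == d then [:: false] else [::]) ++ (if d < h.+1 then [:: true] else [::]).
Proof.
case: (ltngtP d h) => [dh|hd|->]; last by rewrite ltnSn (gtn_eqF (ltnSn h)).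
  by have [-> ->] : h.+1 == d = false /\ d < h.+1 by lia.
by case: eqP => [<-|]; rewrite ?ltnn // => /eqP ?; have -> : d < h.+1 = false by lia.
Qed.

Lemma band_step_down h d : 0 < h ->
  (if d < h then [:: true] else [::]) =
  (if h.-1 == d then [:: true] else [::]) ++ (if d < h.-1 then [:: true] else [::]).
Proof.
move=> h_gt0; case: (ltngtP d h.-1) => [dh|hd|dh].
- by have -> : d < h by lia.
- by have -> : d < h = false by lia.
- by have -> : d < h by lia.
Qed.

Lemma height_rcons s b : rights s <= ups s ->
  height (rcons s b) = if b then (height s).+1 else (height s).-1.
Proof. by rewrite /height ups_rcons rights_rcons; case: b => /=; lia. Qed.

(* Haglund's description of [zeta] through area sequences, diagonal by
   diagonal; for a prefix, the tail accounts for the diagonals that are still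
   open. *)
Lemma band_area_word s d : ballot s ->
  band d (area_word s) = diag_word s d ++ (if d < height s then [:: true] else [::]).
Proof.
elim/last_ind: s => [|s b IH] Hb; first by rewrite /area_word /diag_word /band /height.
have Hs := IH (ballot_rcons Hb).
have Hh := height_rcons b (ballot_rights (ballot_rcons Hb)).
rewrite diag_word_rcons -catA area_word_rcons Hh.
case: b Hb Hh => Hb Hh; first by rewrite band_rcons Hs -catA band_step_up.
rewrite Hs -band_step_down //; move: (ballot_rights Hb).
by rewrite /height ups_rcons rights_rcons in Hh *; lia.
Qed.

Lemma count_predU_disjoint (T : Type) (a b : pred T) s :
  (forall x, ~~ (a x && b x)) -> count (predU a b) s = count a s + count b s.
Proof.
move=> ab; rewrite -count_predUI (@eq_count _ (predI a b) pred0) ?count_pred0 ?addn0 //.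
by move=> x; apply/negbTE/ab.
Qed.

Section KeySort.
Variable key : nat -> nat.

Definition keylt : rel nat :=
  fun a b => (key a < key b) || ((key a == key b) && (a < b)).
Definition keyle : rel nat :=
  fun a b => (key a < key b) || ((key a == key b) && (a <= b)).

Lemma keylt_trans : transitive keylt. Proof. by move=> y x z; rewrite /keylt; lia. Qed.
Lemma keylt_irr : irreflexive keylt. Proof. by move=> x; rewrite /keylt ltnn eqxx ltnn. Qed.
Lemma keylt_total a b : a != b -> keylt a b || keylt b a.
Proof. by rewrite /keylt => /eqP; lia. Qed.
Lemma keyle_trans : transitive keyle. Proof. by move=> y x z; rewrite /keyle; lia. Qed.
Lemma keyle_anti : antisymmetric keyle.
Proof. by move=> x y; rewrite /keyle => H; apply/eqP; lia. Qed.

Definition key_sort (s : seq nat) m :=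
  flatten [seq [seq k <- s | key k == d] | d <- iota 0 m].

Lemma key_sortS s m : key_sort s m.+1 = key_sort s m ++ [seq k <- s | key k == m].
Proof. by rewrite /key_sort -addn1 iotaD map_cat flatten_cat /= cats0. Qed.

Lemma mem_key_sort s m k : (k \in key_sort s m) = (k \in s) && (key k < m).
Proof.
elim: m => [|m IH]; first by rewrite /key_sort /= ltn0 andbF.
by rewrite key_sortS mem_cat IH mem_filter; case: (k \in s); rewrite /= ?andbF //; lia.
Qed.

Lemma key_sort_sorted s m : sorted ltn s -> sorted keylt (key_sort s m).
Proof.
move=> Hs; elim: m => [|m IH] //.
rewrite key_sortS sorted_pairwise; last exact: keylt_trans.
rewrite pairwise_cat -!sorted_pairwise; try exact: keylt_trans.
apply/and3P; split => //.
  apply/allrelP => a b; rewrite mem_key_sort mem_filter => /andP[_ Ha] /andP[/eqP Hb _].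
  by rewrite /keylt Hb Ha.
apply: (sub_in_sorted (P := fun k => key k == m) (e := ltn)).
- by move=> a b /eqP Ha /eqP Hb ab; rewrite /keylt Ha Hb eqxx ltnn; exact: ab.
- by apply/allP => k; rewrite mem_filter => /andP[].
- exact: sorted_filter ltn_trans _ _ Hs.
Qed.

Lemma count_key_sort s m (p : pred nat) :
  count p (key_sort s m) = count (fun k => p k && (key k < m)) s.
Proof.
elim: m => [|m IH].
  by rewrite [RHS](@eq_count _ _ pred0) ?count_pred0 // => k; rewrite ltn0 andbF.
rewrite key_sortS count_cat IH count_filter -count_predU_disjoint; last first.
  by move=> k /=; case: (p k) => //=; lia.
by apply: eq_count => k /=; case: (p k) => //=; lia.
Qed.

Lemma perm_key_sort s m : all (fun k => key k < m) s -> perm_eq (key_sort s m) s.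
Proof.
move=> /allP H; apply/permP => p; rewrite count_key_sort.
by apply: eq_in_count => k /H ->; rewrite andbT.
Qed.

End KeySort.

Lemma level_le s k : level s k <= size s.
Proof.
rewrite /level /height size_ups_rights.
by have := ups_take_le k.+1 s; lia.
Qed.

(* [zeta] reads the labels in order of level, hence as a stable sort by level. *)
Lemma zeta_diag_words D m : ballot D -> size D < m ->
  zeta D = flatten [seq diag_word D d | d <- iota 0 m].
Proof.
move=> Hb Hm.
rewrite /zeta /step_points /mkseq sort_map -map_comp.
set F := relpre _ read_le.
suff -> : sort F (iota 0 (size D)) = key_sort (level D) (iota 0 (size D)) m.
  by rewrite /key_sort map_flatten -map_comp.
apply: (sorted_eq (@keyle_trans (level D)) (@keyle_anti (level D))).
- have Hs : sorted F (sort F (iota 0 (size D))).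
    by apply: sort_sorted => a b; rewrite /F /read_le /=; lia.
  rewrite -(eq_in_sorted (P := fun k => k < size D) (e := F)) //; last first.
    by apply/allP => k; rewrite mem_sort mem_iota add0n.
  move=> a b Ha Hb'; rewrite /F /read_le /keyle /level /height /=.
  have := Hb a.+1; have := Hb b.+1.
  have := size_takel Ha; have := size_takel Hb'; rewrite !size_ups_rights; lia.
- apply: (sub_sorted (e := keylt (level D))); first by move=> a b; rewrite /keylt /keyle; lia.
  exact/key_sort_sorted/iota_ltn_sorted.
- rewrite perm_sort perm_sym; apply: perm_key_sort.
  by apply/allP => k _; apply: leq_ltn_trans (level_le _ _) Hm.
Qed.

Definition bands m w := flatten [seq band d w | d <- iota 0 m].

Lemma zeta_bands n D : dyck n D -> zeta D = bands (size D).+1 (area_word D).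
Proof.
move=> HD; have [Hs Hu Hb] := (dyckP n D).1 HD.
rewrite (zeta_diag_words Hb (ltnSn _)) /bands; congr flatten; apply/eq_in_map => d _.
have hD0 : height D = 0 by rewrite /height (dyck_rights HD) Hu subnn.
by rewrite band_area_word // hD0 ltn0 cats0.
Qed.

Definition part_lt (w : seq nat) : rel nat := fun r' r =>
  ((nth 0 w r').+2 <= nth 0 w r) || ((nth 0 w r == (nth 0 w r').+1) && (r' < r)).

Definition down_deg w r := count (part_lt w ^~ r) (iota 0 (size w)).

Lemma ups_band d w : ups (band d w) = count (pred1 d) w.
Proof. by rewrite /ups /band count_map count_filter; apply: eq_count => x /=; lia. Qed.

Lemma rights_band d w : rights (band d w) = count (fun x => x.+1 == d) w.
Proof. by rewrite /rights /band count_map count_filter; apply: eq_count => x /=; lia. Qed.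

Lemma rights_band_succ d w : rights (band d.+1 w) = ups (band d w).
Proof. by rewrite rights_band ups_band; apply: eq_count => x /=; rewrite eqSS. Qed.

Lemma upx_band d w : upx (band d w) =
  [seq count (fun x => x.+1 == d) (take r w) | r <- iota 0 (size w) & nth 0 w r == d].
Proof.
elim/last_ind: w => [|w v IH] //.
rewrite band_rcons upx_cat IH size_rcons -[(size w).+1]addn1 iotaD add0n filter_cat map_cat /=.
rewrite nth_rcons ltnn eqxx.
have -> : [seq count (fun x => x.+1 == d) (take r (rcons w v)) |
           r <- iota 0 (size w) & nth 0 (rcons w v) r == d] =
          [seq count (fun x => x.+1 == d) (take r w) | r <- iota 0 (size w) & nth 0 w r == d].
  rewrite (@eq_in_filter _ _ (fun r => nth 0 w r == d)); last first.
    by move=> r; rewrite mem_iota add0n => /andP[_ Hr]; rewrite nth_rcons Hr.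
  apply/eq_in_map => r; rewrite mem_filter mem_iota add0n => /and3P[_ _ Hr].
  by rewrite -cats1 takel_cat // ltnW.
case: (v =P d) => [->|_] /=; last by case: (v.+1 == d); rewrite /= ?cats0.
by rewrite addn0 rights_band -cats1 takel_cat // take_size.
Qed.

Lemma count_iota_nth (T : Type) (x0 : T) (p : pred T) s :
  count (fun i => p (nth x0 s i)) (iota 0 (size s)) = count p s.
Proof. by rewrite -[RHS](congr1 (count p) (mkseq_nth x0 s)) /mkseq count_map. Qed.

Lemma down_degE w r : r < size w -> down_deg w r =
  count (fun x => x.+2 <= nth 0 w r) w + count (fun x => x.+1 == nth 0 w r) (take r w).
Proof.
move=> Hr; rewrite /down_deg (eq_count (a2 := predU
    (fun r' => (nth 0 w r').+2 <= nth 0 w r)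
    (fun r' => (nth 0 w r == (nth 0 w r').+1) && (r' < r)))) //.
rewrite count_predU_disjoint; last by move=> x /=; lia.
congr addn; first exact: count_iota_nth.
rewrite -[RHS](count_iota_nth 0) size_take_min; have -> : minn r (size w) = r by lia.
rewrite -(subnKC (ltnW Hr)) iotaD count_cat add0n [X in _ + X](@eq_in_count _ _ pred0).
  rewrite count_pred0 addn0; apply: eq_in_count => i; rewrite mem_iota add0n => /andP[_ Hi].
  by rewrite /= nth_take // eq_sym Hi andbT.
by move=> i; rewrite mem_iota /=; lia.
Qed.

Lemma upx_band_shift d w :
  map (addn (count (fun x => x.+2 <= d) w)) (upx (band d w)) =
  map (down_deg w) [seq r <- iota 0 (size w) | nth 0 w r == d].
Proof.
rewrite upx_band -!map_comp; apply/eq_in_map => r.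
by rewrite mem_filter mem_iota add0n => /andP[/eqP <- /andP[_ Hr]] /=; rewrite down_degE.
Qed.

Lemma upx_bands_from w k d :
  map (addn (count (fun x => x.+2 <= d) w))
      (upx (flatten [seq band d' w | d' <- iota d k])) =
  map (down_deg w) (flatten [seq [seq r <- iota 0 (size w) | nth 0 w r == d'] | d' <- iota d k]).
Proof.
elim: k d => [|k IH] d //=.
rewrite upx_cat !map_cat upx_band_shift -IH -map_comp; congr (_ ++ _).
apply: eq_map => x /=; rewrite rights_band addnA -count_predU_disjoint; last by move=> y /=; lia.
by congr addn; apply: eq_count => y /=; lia.
Qed.

Lemma upx_bands m w :
  upx (bands m w) = map (down_deg w) (key_sort (nth 0 w) (iota 0 (size w)) m).
Proof.
rewrite -(upx_bands_from w m 0) (@eq_count _ _ pred0) ?count_pred0 //.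
by rewrite map_id_in.
Qed.

Section SortedRank.
Variables (T : eqType) (lt : rel T).
Hypothesis lt_trans : transitive lt.
Hypothesis lt_irr : irreflexive lt.
Hypothesis lt_total : forall a b, a != b -> lt a b || lt b a.

Lemma index_sorted L s : sorted lt L -> s \in L -> index s L = count (lt^~ s) L.
Proof.
elim: L => [|a L IH] //= Hs; rewrite inE.
have Ha : all (lt a) L by move: Hs; rewrite (path_sortedE lt_trans) => /andP[].
case: (a =P s) => [<- _|Has /= Hin]; last first.
  have {}Hin : s \in L by move: Hin; case: eqP => // E; rewrite E in Has.
  by rewrite (allP Ha s Hin) add1n IH // (path_sorted Hs).
rewrite lt_irr add0n (@eq_in_count _ _ pred0) ?count_pred0 // => x Hx /=.
by apply/negP => Hxa; have := lt_trans Hxa (allP Ha x Hx); rewrite lt_irr.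
Qed.

Lemma count_lt_downclosed L r (Q : pred T) :
  (forall a b, lt a b -> Q b -> Q a) -> r \in L ->
  (count (lt^~ r) L < count Q L) = Q r.
Proof.
move=> HQ Hr; case: (boolP (Q r)) => Hq; last first.
  apply/negbTE; rewrite -leqNgt; apply: sub_count => x /= Hx.
  case: (x =P r) => [Exr|/eqP /lt_total /orP[] // H]; first by rewrite -Exr Hx in Hq.
  by rewrite (HQ _ _ H Hx) in Hq.
have -> : count (lt^~ r) L = count (predI (lt^~ r) Q) L.
  by apply: eq_count => x /=; case: (boolP (lt x r)) => // H; rewrite (HQ _ _ H Hq).
rewrite -[count Q L]size_filter -(count_predC (lt^~ r)) !count_filter.
rewrite -[X in X < _]addn0 ltn_add2l -has_count.
by apply/hasP; exists r => //=; rewrite lt_irr Hq.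
Qed.

End SortedRank.

Definition rise1 : rel nat := fun a b => b <= a.+1.

Lemma area_word_le D r : nth 0 (area_word D) r <= r.
Proof.
case: (ltnP r (ups D)) => [Hr|Hr]; first by rewrite nth_area_word // leq_subr.
by rewrite nth_default // size_area_word.
Qed.

Lemma area_word0 D : nth 0 (area_word D) 0 = 0.
Proof. by have := area_word_le D 0; rewrite leqn0 => /eqP. Qed.

Section AreaWord.
Variables (n : nat) (D : seq bool).
Hypothesis HD : dyck n D.

Let w := area_word D.

Lemma size_area_word_dyck : size w = n.
Proof. by rewrite size_area_word; case/dyckP: HD. Qed.

Lemma area_word_rise1 : sorted rise1 w.
Proof.
have [_ _ Hb] := (dyckP n D).1 HD.
apply/(sortedP 0) => i; rewrite size_area_word => Hi.
rewrite /rise1 !nth_area_word ?(ltnW Hi) //.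
have := ballot_upx Hb (ltnW Hi); have := ballot_upx Hb Hi.
have := (sortedP 0 (upx_sorted D)) i; rewrite size_upx => /(_ Hi); lia.
Qed.

(* Indices sorted by (area, index): the order in which [zeta] produces up steps. *)
Definition part_order := key_sort (nth 0 w) (iota 0 n) (size D).+1.

Lemma perm_part_order : perm_eq part_order (iota 0 n).
Proof.
apply: perm_key_sort; apply/allP => k; rewrite mem_iota add0n => /andP[_ Hk].
by have [-> _ _] := (dyckP n D).1 HD; have := area_word_le D k; rewrite -/w; lia.
Qed.

Lemma sorted_part_order : sorted (keylt (nth 0 w)) part_order.
Proof. exact/key_sort_sorted/iota_ltn_sorted. Qed.

Lemma uniq_part_order : uniq part_order.
Proof. by rewrite (perm_uniq perm_part_order) iota_uniq. Qed.

Lemma size_part_order : size part_order = n.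
Proof. by rewrite (perm_size perm_part_order) size_iota. Qed.

Lemma mem_part_order k : (k \in part_order) = (k < n).
Proof. by rewrite (perm_mem perm_part_order) mem_iota add0n. Qed.

Lemma upx_zeta : upx (zeta D) = map (down_deg w) part_order.
Proof. by rewrite (zeta_bands HD) upx_bands size_area_word_dyck. Qed.

Lemma down_deg_part_order s : down_deg w s = count (part_lt w ^~ s) part_order.
Proof. by rewrite /down_deg size_area_word_dyck; apply/esym/permP; exact: perm_part_order. Qed.

Lemma part_lt_keylt a s : part_lt w a s -> keylt (nth 0 w) a s.
Proof. by rewrite /part_lt /keylt; lia. Qed.

Lemma part_lt_index r s : r < n -> s < n ->
  part_lt w r s = (index r part_order < down_deg w s).
Proof.
move=> Hr Hs; rewrite (index_sorted (@keylt_trans (nth 0 w)) (@keylt_irr (nth 0 w))); last first.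
- by rewrite mem_part_order.
- exact: sorted_part_order.
rewrite down_deg_part_order.
rewrite (count_lt_downclosed (@keylt_irr (nth 0 w)) (@keylt_total (nth 0 w))) //.
  by move=> a b; rewrite /part_lt /keylt; lia.
by rewrite mem_part_order.
Qed.

Lemma nth_upx_zeta s : s < n -> nth 0 (upx (zeta D)) (index s part_order) = down_deg w s.
Proof.
move=> Hs; rewrite upx_zeta (nth_map 0); last by rewrite index_mem mem_part_order.
by rewrite nth_index // mem_part_order.
Qed.

Lemma zeta_dyck : dyck n (zeta D).
Proof.
have [Hsz Hu _] := (dyckP n D).1 HD.
have Hsz' : size (zeta D) = n + n by rewrite /zeta size_map size_sort size_mkseq.
have Hu' : ups (zeta D) = n by rewrite -size_upx upx_zeta size_map size_part_order.
apply/dyckP; split => //; apply: upx_ballot.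
  by have := size_ups_rights (zeta D); rewrite Hsz' Hu'; lia.
move=> t; rewrite Hu' => Ht.
set s := nth 0 part_order t.
have Hs : s < n by rewrite -mem_part_order mem_nth ?size_part_order.
have <- : index s part_order = t by rewrite index_uniq ?size_part_order ?uniq_part_order.
rewrite nth_upx_zeta // (index_sorted (@keylt_trans (nth 0 w)) (@keylt_irr (nth 0 w))).
- by rewrite down_deg_part_order; apply: sub_count => r /=; exact: part_lt_keylt.
- exact: sorted_part_order.
- by rewrite mem_part_order.
Qed.

End AreaWord.

Definition starts_right (s : seq bool) := ~~ head false s.

Lemma band_cons d x t : band d (x :: t) =
  (if (x == d) || (x.+1 == d) then [:: x == d] else [::]) ++ band d t.
Proof. by rewrite /band /=; case: ifP. Qed.

Lemma band_starts_right t x d : x < d -> path rise1 x t -> starts_right (band d (x :: t)).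
Proof.
elim: t x => [|y t IH] x Hx; rewrite band_cons (ltn_eqF Hx) /=; first by case: (_ == d).
case: (x.+1 =P d) => //= Hne /andP[Hxy Hp]; apply: IH Hp; move: Hxy; rewrite /rise1; lia.
Qed.

Lemma starts_right_flatten ss : all starts_right ss -> starts_right (flatten ss).
Proof. by elim: ss => //= s ss IH /andP[Hs /IH]; case: s Hs. Qed.

(* Both [A] and [A'] end just before the right step numbered [rights A]. *)
Lemma cat_eq_rights_prefix (A A' X X' : seq bool) : A ++ X = A' ++ X' ->
  rights A = rights A' -> starts_right X -> starts_right X' -> A = A'.
Proof.
elim: A A' => [|a A IH] [|a' A'] //=.
- move=> -> /esym; case: a' => //= /eqP; by rewrite eqn0Ngt -has_count.
- move=> <-; case: a => //= /eqP; by rewrite eqn0Ngt -has_count.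
- by case=> -> E /eqP; rewrite eqn_add2l => /eqP C HX HX'; rewrite (IH _ E C HX HX').
Qed.

Lemma band_nil d w : all (fun x => x.+1 < d) w -> band d w = [::].
Proof.
move=> /allP H; rewrite /band (@eq_in_filter _ _ pred0) ?filter_pred0 //.
by move=> x /H /=; lia.
Qed.

Section BandsDetermineWord.
Variables w w' : seq nat.
Hypothesis Hw : forall d, 0 < d -> starts_right (band d w).
Hypothesis Hw' : forall d, 0 < d -> starts_right (band d w').

(* By [rights_band_succ], each band fixes where the next one starts in the
   concatenation. *)
Lemma bands_from_eq k d :
  flatten [seq band d' w | d' <- iota d k] = flatten [seq band d' w' | d' <- iota d k] ->
  rights (band d w) = rights (band d w') ->
  forall d', d <= d' < d + k -> band d' w = band d' w'.
Proof.
elim: k d => [|k IH] d /= Heq Hr d' Hd'; first lia.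
have Htail v : (forall d, 0 < d -> starts_right (band d v)) ->
    starts_right (flatten [seq band d'' v | d'' <- iota d.+1 k]).
  move=> Hv; apply: starts_right_flatten; apply/allP => s /mapP [d'' Hd'' ->].
  by apply: Hv; move: Hd''; rewrite mem_iota; lia.
have E := cat_eq_rights_prefix Heq Hr (Htail _ Hw) (Htail _ Hw').
case: (d' =P d) => [-> //|Hne].
move: Heq; rewrite E => /(congr1 (drop (size (band d w')))); rewrite !drop_size_cat // => Heq.
by apply: (IH d.+1) => //; rewrite ?rights_band_succ ?E //; lia.
Qed.

End BandsDetermineWord.

Lemma rise1_eq_bands t t' : sorted rise1 t -> sorted rise1 t' ->
  (forall d, band d t = band d t') -> t = t'.
Proof.
elim: t t' => [|x t IH] [|x' t'] // Hs Hs' Hb.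
- by have := Hb x'; rewrite band_cons eqxx.
- by have := Hb x; rewrite band_cons eqxx.
case: (ltngtP x x') => Hxx.
- by have := band_starts_right Hxx Hs; rewrite Hb band_cons eqxx.
- by have := band_starts_right Hxx Hs'; rewrite -Hb band_cons eqxx.
rewrite Hxx in Hs Hb *; congr (_ :: _); apply: IH (path_sorted Hs) (path_sorted Hs') _.
by move=> d; have := Hb d; rewrite !band_cons; case: ifP => _ //= [].
Qed.

Lemma area_word_inj n D1 D2 : dyck n D1 -> dyck n D2 -> area_word D1 = area_word D2 -> D1 = D2.
Proof.
move=> H1 H2 Ew.
have [_ U1 B1] := (dyckP n D1).1 H1; have [_ U2 B2] := (dyckP n D2).1 H2.
apply: upx_inj; first by rewrite (dyck_rights H1) (dyck_rights H2).
apply: (@eq_from_nth _ 0); first by rewrite !size_upx U1 U2.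
move=> r; rewrite size_upx U1 => Hr.
have Hr1 : r < ups D1 by rewrite U1.
have Hr2 : r < ups D2 by rewrite U2.
have := nth_area_word Hr1; rewrite Ew nth_area_word //.
by move: (ballot_upx B1 Hr1) (ballot_upx B2 Hr2); lia.
Qed.

Lemma area_word_starts_right n D : dyck n D ->
  forall d, 0 < d -> starts_right (band d (area_word D)).
Proof.
move=> HD d Hd; have := area_word_rise1 HD; have := area_word0 D.
by case: (area_word D) => [|x t] //= -> Hs; apply: band_starts_right.
Qed.

Lemma area_word_lt n D : dyck n D -> all (fun x => x < n) (area_word D).
Proof.
move=> HD; apply/(all_nthP 0) => r; rewrite (size_area_word_dyck HD) => Hr.
exact: leq_ltn_trans (area_word_le D r) Hr.
Qed.

Lemma zeta_inj n D1 D2 : dyck n D1 -> dyck n D2 -> zeta D1 = zeta D2 -> D1 = D2.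
Proof.
move=> H1 H2; rewrite (zeta_bands H1) (zeta_bands H2).
have [-> _ _] := (dyckP n D1).1 H1; have [-> _ _] := (dyckP n D2).1 H2.
move=> Ez; apply: (area_word_inj H1 H2).
apply: rise1_eq_bands (area_word_rise1 H1) (area_word_rise1 H2) _ => d.
case: (ltnP d (n + n).+1) => Hd.
  apply: (bands_from_eq (area_word_starts_right H1) (area_word_starts_right H2) Ez).
    by rewrite !rights_band !(@eq_count _ _ pred0) ?count_pred0.
  by rewrite add0n Hd.
have Hsmall D : dyck n D -> all (fun x => x.+1 < d) (area_word D).
  by move=> HD; apply: sub_all (area_word_lt HD) => x /=; lia.
by rewrite !band_nil // Hsmall.
Qed.

Definition dyck_paths n := map val (enum [pred t : (n + n).-tuple bool | dyck n t]).

Lemma mem_dyck_paths n D : (D \in dyck_paths n) = dyck n D.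
Proof.
apply/idP/idP; first by case/mapP => t; rewrite mem_enum inE => H ->.
move=> HD; have [Hs _ _] := (dyckP n D).1 HD; have /eqP Hs' := Hs.
by apply/mapP; exists (Tuple Hs'); rewrite ?mem_enum ?inE.
Qed.

Lemma uniq_dyck_paths n : uniq (dyck_paths n).
Proof. by rewrite map_inj_uniq ?enum_uniq //; exact: val_inj. Qed.

(* An injection of the finite set of Dyck paths into itself is onto. *)
Lemma zeta_surj n E : dyck n E -> exists2 D, dyck n D & zeta D = E.
Proof.
move=> HE.
have Hu : uniq (map zeta (dyck_paths n)).
  by rewrite map_inj_in_uniq ?uniq_dyck_paths // => D1 D2; rewrite !mem_dyck_paths; exact: zeta_inj.
have Hsub : {subset map zeta (dyck_paths n) <= dyck_paths n}.
  by move=> E' /mapP [D]; rewrite !mem_dyck_paths => HD ->; exact: zeta_dyck.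
have [_ Heq] := uniq_min_size Hu Hsub (eq_leq (esym (size_map _ _))).
have : E \in map zeta (dyck_paths n) by rewrite Heq mem_dyck_paths.
by case/mapP => D; rewrite mem_dyck_paths => HD ->; exists D.
Qed.

Lemma card_ord_count n (p : pred nat) : #|[pred a : 'I_n | p a]| = count p (iota 0 n).
Proof. by rewrite cardE size_filter -enumT -val_enum_ord count_map. Qed.

Lemma card_ord_lt n k : #|[pred a : 'I_n | a < k]| = minn k n.
Proof.
rewrite (card_ord_count n (fun i => i < k)); elim: n => [|n IH]; first by rewrite minn0.
by rewrite -[n.+1]addn1 iotaD count_cat IH /= add0n addn0; lia.
Qed.

Fixpoint path_from (c : nat) (e : seq nat) (m : nat) : seq bool :=
  match e with
  | [::] => nseq (m - c) false
  | x :: e' => nseq (x - c) false ++ true :: path_from x e' m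
  end.

Lemma upx_nseq_false k : upx (nseq k false) = [::].
Proof. by elim: k => //= k ->. Qed.

Lemma rights_nseq_false k : rights (nseq k false) = k.
Proof. by rewrite /rights count_nseq mul1n. Qed.

Lemma ups_nseq_false k : ups (nseq k false) = 0.
Proof. by rewrite /ups count_nseq mul0n. Qed.

Lemma upx_path_from c e m : path leq c e -> upx (path_from c e m) = map (subn^~ c) e.
Proof.
elim: e c => [|x e IH] c /=; first by rewrite upx_nseq_false.
case/andP => Hcx He.
rewrite upx_cat upx_nseq_false rights_nseq_false /= IH // addn0; congr (_ :: _).
rewrite -map_comp; apply/eq_in_map => y Hy /=.
by move: He; rewrite (path_sortedE leq_trans) => /andP[/allP /(_ y Hy)]; lia.
Qed.

Lemma ups_path_from c e m : ups (path_from c e m) = size e.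
Proof.
elim: e c => [|x e IH] c /=; first by rewrite ups_nseq_false.
by rewrite /ups count_cat -/(ups _) ups_nseq_false /= -/(ups _) IH.
Qed.

Lemma rights_path_from c e m : path leq c e -> all (leq^~ m) e -> c <= m ->
  rights (path_from c e m) = m - c.
Proof.
elim: e c => [|x e IH] c /=; first by rewrite rights_nseq_false.
case/andP => Hcx He /andP[Hx Hall] Hc.
by rewrite /rights count_cat -/(rights _) rights_nseq_false /= -/(rights _) IH //; lia.
Qed.

Lemma perm_map_enum (T : finType) (f : T -> T) : bijective f -> perm_eq (map f (enum T)) (enum T).
Proof.
move=> fbij; apply: uniq_perm; rewrite ?enum_uniq //.
  by rewrite map_inj_uniq ?enum_uniq //; exact: bij_inj.
by case: fbij => g fg gf x; rewrite mem_enum -[x]gf map_f ?mem_enum.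
Qed.

(* How a unit interval order looks once its intervals are numbered from left
   to right. *)
Section NaturallyLabelled.
Variables (n : nat) (U : rel 'I_n).
Hypothesis U_lt : forall a b : 'I_n, U a b -> a < b.
Hypothesis U_l : forall a a' b : 'I_n, a' <= a -> U a b -> U a' b.
Hypothesis U_r : forall a b b' : 'I_n, b <= b' -> U a b -> U a b'.

Definition down_card (b : 'I_n) := #|[pred a | U a b]|.

(* The predecessors of [b] form an initial segment. *)
Lemma relE_down_card (a b : 'I_n) : U a b = (a < down_card b).
Proof.
case: (boolP (U a b)) => H.
  have : #|[pred a' : 'I_n | a' < a.+1]| <= down_card b.
    by apply: subset_leq_card; apply/subsetP => x; rewrite !inE /= => Hx; exact: U_l H.
  by rewrite card_ord_lt; have := ltn_ord a; lia.
apply/esym/negbTE; rewrite -leqNgt.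
have : down_card b <= #|[pred a' : 'I_n | a' < a]|.
  apply: subset_leq_card; apply/subsetP => x; rewrite !inE /= => Hx.
  by rewrite ltnNge; apply/negP => Hax; rewrite (U_l Hax Hx) in H.
by rewrite card_ord_lt; lia.
Qed.

Lemma down_card_le (b : 'I_n) : down_card b <= b.
Proof.
have : down_card b <= #|[pred a' : 'I_n | a' < b]|.
  by apply: subset_leq_card; apply/subsetP => x; rewrite !inE /=; exact: U_lt.
by rewrite card_ord_lt; lia.
Qed.

Lemma down_card_mono (b b' : 'I_n) : b <= b' -> down_card b <= down_card b'.
Proof.
by move=> Hb; apply: subset_leq_card; apply/subsetP => x; rewrite !inE /=; exact: U_r.
Qed.

Definition down_cards := map down_card (enum 'I_n).

Lemma size_down_cards : size down_cards = n.
Proof. by rewrite size_map size_enum_ord. Qed.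

Lemma nth_down_cards r (Hr : r < n) : nth 0 down_cards r = down_card (Ordinal Hr).
Proof.
rewrite (nth_map (Ordinal Hr)) ?size_enum_ord //; congr down_card.
by apply: val_inj; rewrite /= nth_enum_ord.
Qed.

Lemma down_cards_sorted : sorted leq down_cards.
Proof.
apply/(sortedP 0) => i; rewrite size_down_cards => Hi.
by rewrite (nth_down_cards (ltnW Hi)) (nth_down_cards Hi); apply: down_card_mono => /=.
Qed.

(* The Dyck path [a(U)]: its [j]-th up step starts at abscissa [down_card j]. *)
Definition a_path := path_from 0 down_cards n.

Lemma upx_a_path : upx a_path = down_cards.
Proof.
rewrite /a_path upx_path_from; last by rewrite path_min_sorted ?down_cards_sorted //; apply/allP.
by rewrite map_id_in // => x _; rewrite subn0.
Qed.

Lemma a_path_dyck : dyck n a_path.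
Proof.
have Hp : path leq 0 down_cards by rewrite path_min_sorted ?down_cards_sorted //; apply/allP.
have Hu : ups a_path = n by rewrite /a_path ups_path_from size_down_cards.
have Hr : rights a_path = n.
  rewrite /a_path rights_path_from ?subn0 //.
  by apply/allP => x /mapP [b _ ->]; apply: leq_trans (down_card_le b) (ltnW _).
apply/dyckP; split => //; first by rewrite size_ups_rights Hu Hr.
apply: upx_ballot; first by rewrite Hu Hr.
by move=> r; rewrite Hu => Hrn; rewrite upx_a_path (nth_down_cards Hrn); exact: down_card_le.
Qed.

Lemma is_a_path : is_a U a_path.
Proof.
split; first exact: a_path_dyck.
move=> i j; rewrite in_areaE upx_a_path /a_path ups_path_from size_down_cards; split.
- case/and4P => Hi Hij Hj Hx.
  have Hi' : i.-1 < n by lia.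
  exists (Ordinal Hi'), (Ordinal Hj); split => /=; try lia.
  by rewrite relE_down_card /= -leqNgt -(nth_down_cards Hj).
- case=> i' [j' [-> -> Hij HU]] /=; rewrite ltnS Hij ltn_ord /=.
  have -> : nth 0 down_cards j' = down_card j'.
    by rewrite (nth_down_cards (ltn_ord j')); congr down_card; apply: val_inj.
  by rewrite leqNgt -relE_down_card.
Qed.

Lemma down_deg_iso w (f : 'I_n -> 'I_n) : size w = n -> bijective f ->
  (forall i j, Pw w i j = U (f i) (f j)) -> forall r : 'I_n, down_deg w r = down_card (f r).
Proof.
move=> Hw fbij Hf r; rewrite /down_deg Hw -card_ord_count.
transitivity #|f @^-1: [set a | U a (f r)]|.
  by apply: eq_card => r'; rewrite !inE -Hf.
by rewrite card_preimset ?cardsE //; exact: bij_inj.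
Qed.

(* Relabelling each element by the rank at which [zeta] produces its up step
   turns [P(w)] into [U]. *)
Lemma exists_p : exists D, is_p U D.
Proof.
have [D HD HzD] := zeta_surj a_path_dyck.
exists D; split => //.
have mem_i (i : 'I_n) : nat_of_ord i \in part_order n D by rewrite mem_part_order.
have Hidx (i : 'I_n) : index (nat_of_ord i) (part_order n D) < n.
  by rewrite -[X in _ < X](size_part_order HD) index_mem.
exists (fun i => Ordinal (Hidx i)); split.
  apply: injF_bij => i j /(congr1 val) /= E; apply: ord_inj.
  by rewrite -(nth_index 0 (mem_i i)) E nth_index.
move=> i j; rewrite (area_seqE HD); change (Pw _ i j) with (part_lt (area_word D) i j).
rewrite (part_lt_index HD) // relE_down_card /=.
by rewrite -(nth_upx_zeta HD) ?HzD ?upx_a_path ?(nth_down_cards (Hidx j)).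
Qed.

Lemma zeta_p_path D : is_p U D -> zeta D = a_path.
Proof.
case=> HD [f [fbij Hf]]; rewrite (area_seqE HD) in Hf.
apply: upx_inj; first by rewrite (dyck_rights (zeta_dyck HD)) (dyck_rights a_path_dyck).
apply: (sorted_eq leq_trans anti_leq (upx_sorted _)).
  by rewrite upx_a_path down_cards_sorted.
rewrite (upx_zeta HD) upx_a_path /down_cards.
apply: perm_trans (perm_map _ (perm_part_order HD)) _.
rewrite -val_enum_ord -map_comp (eq_map (down_deg_iso (size_area_word_dyck HD) fbij Hf)).
by rewrite map_comp perm_map ?perm_map_enum.
Qed.

End NaturallyLabelled.

Section UnitIntervalOrder.
Variables (n : nat) (U : rel 'I_n) (x : 'I_n -> R).
Hypothesis x_incr : forall i j : 'I_n, (i < j)%N -> Rlt (x i) (x j).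
Hypothesis U_x : forall i j : 'I_n, U i j <-> Rlt (Rplus (x i) R1) (x j).

Lemma left_ends_mono (a b : 'I_n) : a <= b -> Rle (x a) (x b).
Proof.
rewrite leq_eqVlt => /orP [/eqP/ord_inj ->|/x_incr]; [exact: Rle_refl | exact: Rlt_le].
Qed.

Lemma UIO_lt (a b : 'I_n) : U a b -> a < b.
Proof. by move/U_x => H; rewrite ltnNge; apply/negP => /left_ends_mono; lra. Qed.

Lemma UIO_left (a a' b : 'I_n) : a' <= a -> U a b -> U a' b.
Proof. by move=> /left_ends_mono Ha /U_x H; apply/U_x; lra. Qed.

Lemma UIO_right (a b b' : 'I_n) : b <= b' -> U a b -> U a b'.
Proof. by move=> /left_ends_mono Hb /U_x H; apply/U_x; lra. Qed.

End UnitIntervalOrder.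

Theorem mainTheorem1 (n : nat) (U : rel 'I_n) :
  (0 < n)%N -> is_UIO U ->
  (exists D, is_p U D) /\ (forall D, is_p U D -> is_a U (zeta D)).
Proof.
move=> _ [x [x_incr U_x]].
have U_lt := UIO_lt x_incr U_x.
have U_l := UIO_left x_incr U_x.
have U_r := UIO_right x_incr U_x.
split; first exact: exists_p.
by move=> D /(zeta_p_path U_lt U_r) ->; exact: is_a_path.
Qed.
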